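(* Let $v$ be an indeterminate and $q=v^2$. For all integers $m,n\in\mathbb{Z}$, the following identity holds in $\mathbb{Q}(v)((x))$: \[ \sigma_m^0\,\sigma_n^0=\sum_{i=0}^{\infty}\gamma_{m,n}^{i}\,\sigma_{m+n-i}^0, \qquad\text{where}\qquad \gamma_{m,n}^{i}=\{m\}_i\,\{n\}_i\,\begin{bmatrix} m+n+1\\ i\end{bmatrix}. \] (The infinite sum converges $x$-adically.)
   Context: Notation: for $n\in\mathbb{Z}$ and $i\in\mathbb{Z}_{\ge0}$, $\{n\}=v^n-v^{-n}$, $\{n\}_i=\{n\}\{n-1\}\cdots\{n-i+1\}$ (with $\{n\}_0=1$), $[n]=\frac{v^n-v^{-n}}{v-v^{-1}}$, $[i]!=[i][i-1]\cdots[1]$, and $\begin{bmatrix} n\\ i\end{bmatrix}=\frac{[n][n-1]\cdots[n-i+1]}{[i]!}$ (defined also for negative $n$). For $n\in\mathbb{Z}$ define the rational function $\sigma_n\in\mathbb{Q}(x,q)$ by $\sigma_n=\prod_{i=1}^{n}(x+x^{-1}-q^i-q^{-i})$ if $n\ge 0$ and $\sigma_n=\prod_{i=0}^{-n-1}(x+x^{-1}-q^i-q^{-i})^{-1}$ if $n<0$. Let $\sigma_n^0\in\mathbb{Z}[q^{\pm1}]((x))$ denote the Laurent expansion of $\sigma_n$ at $x=0$ (for $n<0$ this is a power series divisible by $x^{-n}$). *)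

From HB Require Import structures.
From mathcomp Require Import all_boot all_order all_algebra.
From mathcomp Require Import fraction generic_quotient.
Set Implicit Arguments. Unset Strict Implicit. Unset Printing Implicit Defensive.
Import Order.TTheory GRing.Theory Num.Theory.
Local Open Scope ring_scope.

Section Series.
Variable K : fieldType.

Definition ps := nat -> K.

Definition ps_mul (f g : ps) : ps :=
  fun n => \sum_(i < n.+1) f i * g (n - i)%N.

(* first n+1 coefficients of the multiplicative inverse of f (f 0 <> 0) *)
Fixpoint ps_inv_aux (f : ps) (n : nat) : seq K :=
  match n with
  | 0 => [:: (f 0%N)^-1]
  | n'.+1 =>
      let s := ps_inv_aux f n' in
      rcons s (- (f 0%N)^-1 * \sum_(1 <= i < n'.+2) f i * nth 0 s (n'.+1 - i))
  end.

Definition ps_inv (f : ps) : ps := fun n => nth 0 (ps_inv_aux f n) n.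

(* a formal Laurent series  x^(s.1) * s.2  *)
Definition ls := (int * ps)%type.

Definition ls_coef (s : ls) (k : int) : K :=
  match (k - s.1)%R with Posz j => s.2 j | Negz _ => 0 end.

Definition ls_mul (s t : ls) : ls := ((s.1 + t.1)%R, ps_mul s.2 t.2).

(* Laurent expansion at x = 0 of p / d (d <> 0 polynomials):
   d = x^j d' with d'(0) <> 0, and p/d = x^(-j) * p * d'^(-1). *)
Definition laurent_pq (p d : {poly K}) : ls :=
  let j := find (fun c => c != 0) d in
  ((- (j%:Z))%R, ps_mul (fun i => p`_i) (ps_inv (fun i => d`_(i + j)))).

Definition laurent (r : {fraction {poly K}}) : ls :=
  laurent_pq \n_(repr r) \d_(repr r).

Definition xF : {fraction {poly K}} := (@FracField.tofrac _ 'X).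
Definition cF (c : K) : {fraction {poly K}} := @FracField.tofrac _ c%:P.

Definition sigma_fac (q : K) (i : nat) : {fraction {poly K}} :=
  xF + xF^-1 - cF (q ^+ i) - cF (q ^+ i)^-1.

Definition sigma (q : K) (n : int) : {fraction {poly K}} :=
  match n with
  | Posz n' => \prod_(1 <= i < n'.+1) sigma_fac q i
  | Negz n' => (\prod_(0 <= i < n'.+1) sigma_fac q i)^-1
  end.
(* note: Negz n' = -(n'+1), so the product is over i = 0 .. -n-1 *)

Definition sigma0 (q : K) (n : int) : ls := laurent (sigma q n).
End Series.

Definition Qv := {fraction {poly rat}}.
Definition vv : Qv := (@FracField.tofrac _ 'X).
Definition qq : Qv := vv ^+ 2.

Definition qbr (n : int) : Qv := vv ^ n - vv ^ (- n).
Definition qbr_fall (n : int) (i : nat) : Qv := \prod_(k < i) qbr (n - k%:Z).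
Definition qint (n : int) : Qv := (vv ^ n - vv ^ (- n)) / (vv - vv^-1).
Definition qfact (i : nat) : Qv := \prod_(1 <= k < i.+1) qint k%:Z.
Definition qbinom (n : int) (i : nat) : Qv :=
  (\prod_(k < i) qint (n - k%:Z)) / qfact i.

Definition gamma (m n : int) (i : nat) : Qv :=
  qbr_fall m i * qbr_fall n i * qbinom (m + n + 1) i.

From mathcomp Require Import all_boot all_order all_algebra.
From mathcomp Require Import fraction generic_quotient.
From mathcomp Require Import ring zify.
Set Implicit Arguments. Unset Strict Implicit. Unset Printing Implicit Defensive.
Import GRing.Theory Num.Theory.
Local Open Scope ring_scope.

(* Induction on m, upwards and downwards.  With a_k = q^k + q^-k = {k}^2 + 2 we have
   sigma_k = sigma_(k-1) (x + x^-1 - a_k), and multiplying a Laurent series by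
   x + x^-1 - a acts on its coefficients as h |-> h(k-1) + h(k+1) - a h(k).  This
   operator for a = a_(m+1) maps both sides of the identity for m to those for m + 1:
   on the right because sigma_j (x + x^-1 - a_(m+1)) = sigma_(j+1) + (a_(j+1) - a_(m+1)) sigma_j
   and gamma_(m+1,n)^(i+1) = gamma_(m,n)^(i+1) + gamma_(m,n)^i (a_(m+n+1-i) - a_(m+1)).
   At m = 0 both sides are sigma_n^0, and the step can be reversed because
   multiplication by a nonzero Laurent polynomial is injective on Laurent series.
   As sigma_j^0 = O(x^-j), each coefficient of the right-hand side is a finite sum. *)

Lemma sumr_ord_widen0 (V : nmodType) (a b : nat) (F : nat -> V) : (a <= b)%N ->
  (forall i, (a <= i)%N -> F i = 0) -> \sum_(i < b) F i = \sum_(i < a) F i.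
Proof.
move=> ab F0; rewrite -(subnKC ab) big_split_ord /= [X in _ + X]big1 ?addr0 //.
by move=> i _; apply: F0; exact: leq_addr.
Qed.

Lemma coefM_eq_low (R : nzSemiRingType) (N : nat) (p p' q q' : {poly R}) :
  (forall i, (i < N)%N -> p`_i = p'`_i) -> (forall i, (i < N)%N -> q`_i = q'`_i) ->
  forall i, (i < N)%N -> (p * q)`_i = (p' * q')`_i.
Proof.
move=> pp' qq' i iN; rewrite !coefM; apply: eq_bigr => j _.
have := ltn_ord j; rewrite ltnS => ji.
by rewrite pp' ?qq' //; lia.
Qed.

Lemma sum_shift_rec (R : comPzRingType) (M : nat) (g g' d E : nat -> R) :
  g' 0%N = g 0%N -> (forall i, g' i.+1 = g i.+1 + g i * d i) ->
  \sum_(i < M.+1) g' i * E i = \sum_(i < M) g i * (E i + d i * E i.+1) + g M * E M.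
Proof.
move=> g'0 g'S.
have sum_recl : \sum_(i < M.+1) g i * E i = g 0%N * E 0%N + \sum_(i < M) g i.+1 * E i.+1.
  exact: big_ord_recl.
rewrite big_ord_recl g'0 /=; under eq_bigr do rewrite g'S mulrDl.
rewrite big_split /= addrA -sum_recl big_ord_recr /= addrAC.
by congr (_ + _); rewrite -big_split; apply: eq_bigr => i _ /=; rewrite mulrDr mulrA.
Qed.

Lemma int_succ_ind (P : int -> Prop) :
  P 0 -> (forall k, P k -> P (k + 1)) -> (forall k, P (k + 1) -> P k) -> forall k, P k.
Proof.
move=> P0 up down; elim/int_rect => // j Pj.
  have -> : j.+1%:Z = j%:Z + 1 by lia.
  exact: up.
apply: down; have -> : - j.+1%:Z + 1 = - j%:Z by lia.
exact: Pj.
Qed.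

Lemma divfMlK (F : fieldType) (x q w : F) : q != 0 -> x / (q * w) * q = x / w.
Proof. by move=> q0; rewrite invfM mulrA mulrAC divfK. Qed.

Section PowerSeries.
Variable K : fieldType.
Implicit Types f g h : ps K.

(* The ring laws of [ps_mul] are inherited from [{poly K}] through truncation. *)
Lemma ps_mul_coefM N f g n : (n < N)%N ->
  ps_mul f g n = (\poly_(i < N) f i * \poly_(i < N) g i)`_n.
Proof.
move=> nN; rewrite coefM /ps_mul; apply: eq_bigr => i _.
have := ltn_ord i; rewrite ltnS => ni.
by rewrite !coef_poly !ifT //; lia.
Qed.

Lemma coef_poly_ps_mul N f g i : (i < N)%N ->
  (\poly_(j < N) ps_mul f g j)`_i = (\poly_(j < N) f j * \poly_(j < N) g j)`_i.
Proof. by move=> iN; rewrite coef_poly iN; exact: ps_mul_coefM. Qed.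

Lemma ps_mulA f g h : ps_mul (ps_mul f g) h =1 ps_mul f (ps_mul g h).
Proof.
move=> n; rewrite !(ps_mul_coefM (N := n.+1)) //.
rewrite (coefM_eq_low (coef_poly_ps_mul f g) (fun _ _ => erefl) (ltnSn n)).
rewrite (coefM_eq_low (fun _ _ => erefl) (coef_poly_ps_mul g h) (ltnSn n)).
by rewrite mulrA.
Qed.

Lemma ps_mulC f g : ps_mul f g =1 ps_mul g f.
Proof. by move=> n; rewrite !(ps_mul_coefM (N := n.+1)) // mulrC. Qed.

Lemma ps_mulACA f g h (k : ps K) :
  ps_mul (ps_mul f g) (ps_mul h k) =1 ps_mul (ps_mul f h) (ps_mul g k).
Proof.
move=> n; rewrite !(ps_mul_coefM (N := n.+1)) //.
rewrite (coefM_eq_low (coef_poly_ps_mul f g) (coef_poly_ps_mul h k) (ltnSn n)).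
rewrite (coefM_eq_low (coef_poly_ps_mul f h) (coef_poly_ps_mul g k) (ltnSn n)).
by rewrite mulrACA.
Qed.

Lemma eq_ps_mul f f' g g' : f =1 f' -> g =1 g' -> ps_mul f g =1 ps_mul f' g'.
Proof. by move=> ff' gg' n; apply: eq_bigr => i _; rewrite ff' gg'. Qed.

Definition ps1 : ps K := fun i => (i == 0)%:R.

Lemma ps_mul1l f : ps_mul ps1 f =1 f.
Proof.
move=> n; rewrite (ps_mul_coefM (N := n.+1)) //.
have one_low i : (i < n.+1)%N -> (\poly_(j < n.+1) ps1 j)`_i = (1 : {poly K})`_i.
  by move=> iN; rewrite coef_poly iN coef1.
by rewrite (coefM_eq_low one_low (fun _ _ => erefl) (ltnSn n)) mul1r coef_poly ltnSn.
Qed.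

Definition ps_shift (k : nat) f : ps K := fun i => if (i < k)%N then 0 else f (i - k)%N.

Lemma ps_mul_shiftl k f g : ps_mul (ps_shift k f) g =1 ps_shift k (ps_mul f g).
Proof.
move=> n; rewrite (ps_mul_coefM (N := n.+1)) //.
have shift_low i : (i < n.+1)%N ->
    (\poly_(j < n.+1) ps_shift k f j)`_i = ('X^k * \poly_(j < n.+1) f j)`_i.
  move=> iN; rewrite coef_poly iN coefXnM /ps_shift; case: ifP => // _.
  by rewrite coef_poly ifT //; lia.
rewrite (coefM_eq_low shift_low (fun _ _ => erefl) (ltnSn n)) -mulrA coefXnM /ps_shift.
by case: ifP => // _; rewrite (ps_mul_coefM (N := n.+1)) //; lia.
Qed.

Lemma size_ps_inv_aux f n : size (ps_inv_aux f n) = n.+1.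
Proof. by elim: n => //= n IHn; rewrite size_rcons IHn. Qed.

Lemma nth_ps_inv_aux f n i : (i <= n)%N -> nth 0 (ps_inv_aux f n) i = ps_inv f i.
Proof.
elim: n i => [|n IHn] i le_in; first by have -> : i = 0%N by lia.
case: (ltnP i n.+1) => lt_in; first by rewrite /= nth_rcons size_ps_inv_aux lt_in IHn.
by have -> : i = n.+1 by lia.
Qed.

Lemma ps_invS f n :
  ps_inv f n.+1 = - (f 0%N)^-1 * \sum_(i < n.+1) f i.+1 * ps_inv f (n - i)%N.
Proof.
rewrite {1}/ps_inv /= nth_rcons size_ps_inv_aux ltnn eqxx big_add1 /= big_mkord.
congr (_ * _); apply: eq_bigr => i _.
by rewrite nth_ps_inv_aux ?subSS //; lia.
Qed.

Lemma ps_mulV f : f 0%N != 0 -> ps_mul f (ps_inv f) =1 ps1.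
Proof.
move=> f0 [|n]; first by rewrite /ps_mul big_ord1 /ps_inv /= mulfV.
rewrite /ps_mul big_ord_recl /= subn0 ps_invS mulrA mulrN mulfV // mulN1r.
rewrite /ps1 /=; apply/eqP; rewrite addrC subr_eq0; apply/eqP.
by apply: eq_bigr.
Qed.

End PowerSeries.

Section LaurentSeries.
Variable K : fieldType.
Implicit Types (s t : ls K) (d : {poly K}) (h : int -> K).

Lemma ls_coef_lt s k : k < s.1 -> ls_coef s k = 0.
Proof. by rewrite /ls_coef; case E: (k - s.1) => [j|j] // ks; lia. Qed.

Lemma ls_coef_addr s (j : nat) : ls_coef s (s.1 + j%:Z) = s.2 j.
Proof. by rewrite /ls_coef (addrC s.1) addrK. Qed.

Lemma eq_ls_coef s t : s.1 = t.1 -> s.2 =1 t.2 -> ls_coef s =1 ls_coef t.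
Proof. by move=> st1 st2 k; rewrite /ls_coef st1; case: (k - t.1). Qed.

Lemma ls_coef_cases s k :
  (k < s.1 /\ ls_coef s k = 0) \/ (exists j : nat, k = s.1 + j%:Z /\ ls_coef s k = s.2 j).
Proof.
case: (ltrP k s.1) => ks; first by left; split => //; exact: ls_coef_lt.
right; exists `|k - s.1|%N.
have e : k = s.1 + (`|k - s.1|%N)%:Z by lia.
by split => //; rewrite {1}e ls_coef_addr.
Qed.

Lemma ls_coef_shift (e : int) (f : ps K) (a : nat) :
  ls_coef (e - a%:Z, ps_shift a f) =1 ls_coef (e, f).
Proof.
move=> k; case: (ls_coef_cases (e, f) k) => [[/= lt_ke ->]|[j [-> ->]]] /=.
  case: (ls_coef_cases (e - a%:Z, ps_shift a f) k) => [[_ ->]|[j [/= e_k ->]]] //.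
  by rewrite /ps_shift ifT //; lia.
have -> : e + j%:Z = (e - a%:Z) + (j + a)%N%:Z by lia.
by rewrite ls_coef_addr /= /ps_shift ifF ?addnK //; lia.
Qed.

Lemma ls_mulA s t (u : ls K) :
  ls_coef (ls_mul (ls_mul s t) u) =1 ls_coef (ls_mul s (ls_mul t u)).
Proof. by apply: eq_ls_coef; [rewrite /= addrA | exact: ps_mulA]. Qed.

Lemma ls_mulC s t : ls_coef (ls_mul s t) =1 ls_coef (ls_mul t s).
Proof. by apply: eq_ls_coef; [rewrite /= addrC | exact: ps_mulC]. Qed.

Lemma ls_mulACA s t (u w : ls K) :
  ls_coef (ls_mul (ls_mul s t) (ls_mul u w)) =1 ls_coef (ls_mul (ls_mul s u) (ls_mul t w)).
Proof. by apply: eq_ls_coef; [rewrite /= addrACA | exact: ps_mulACA]. Qed.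

Lemma ls_mul_shiftl s t (a : nat) :
  ls_coef (ls_mul (s.1 - a%:Z, ps_shift a s.2) t) =1 ls_coef (ls_mul s t).
Proof.
move=> k; rewrite -[RHS](ls_coef_shift _ _ a).
by apply: eq_ls_coef; [rewrite /= addrAC | exact: ps_mul_shiftl].
Qed.

(* Rewritten over the common exponent [E], the series of [s] and [s'] agree. *)
Lemma eq_ls_mull s s' t :
  ls_coef s =1 ls_coef s' -> ls_coef (ls_mul s t) =1 ls_coef (ls_mul s' t).
Proof.
move=> ss'; pose E : int := - (`|s.1|%N%:Z + `|s'.1|%N%:Z).
pose a := `|s.1 - E|%N; pose a' := `|s'.1 - E|%N.
have Ea : s.1 - a%:Z = E by rewrite /a /E; lia.
have Ea' : s'.1 - a'%:Z = E by rewrite /a' /E; lia.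
have shift_eq j : ps_shift a s.2 j = ps_shift a' s'.2 j.
  have := ls_coef_shift s.1 s.2 a (E + j%:Z).
  have := ls_coef_shift s'.1 s'.2 a' (E + j%:Z).
  rewrite Ea Ea' !(ls_coef_addr (E, _)) -!surjective_pairing /= => -> ->; exact: ss'.
move=> k; rewrite -(ls_mul_shiftl s t a) -(ls_mul_shiftl s' t a').
by apply: eq_ls_coef; [rewrite /= Ea Ea' | exact: eq_ps_mul].
Qed.

Lemma eq_ls_mulr s t t' :
  ls_coef t =1 ls_coef t' -> ls_coef (ls_mul s t) =1 ls_coef (ls_mul s t').
Proof. by move=> tt' k; rewrite ls_mulC (eq_ls_mull _ tt') ls_mulC. Qed.

Definition poly_ls d : ls K := (0, fun i => d`_i).

Lemma poly_lsM d d' : ls_coef (ls_mul (poly_ls d) (poly_ls d')) =1 ls_coef (poly_ls (d * d')).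
Proof. by apply: eq_ls_coef => [|i] /=; rewrite ?addr0 ?coefM. Qed.

Definition pconv d h (k : int) : K := \sum_(i < size d) d`_i * h (k - i%:Z).

Lemma pconv_widen d h k N : (size d <= N)%N ->
  pconv d h k = \sum_(i < N) d`_i * h (k - i%:Z).
Proof.
move=> dN; rewrite /pconv (sumr_ord_widen0 (F := fun i => d`_i * h (k - i%:Z)) dN) //.
by move=> i di; rewrite nth_default // mul0r.
Qed.

Lemma pconvB d h h' k : pconv d (fun j => h j - h' j) k = pconv d h k - pconv d h' k.
Proof. by rewrite /pconv -sumrB; apply: eq_bigr => i _; rewrite mulrBr. Qed.

Lemma ls_coef_mul_poly (e : int) d s k :
  ls_coef (ls_mul (e, fun i => d`_i) s) k = pconv d (ls_coef s) (k - e).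
Proof.
case: (ls_coef_cases (ls_mul (e, fun i => d`_i) s) k) => [[/= lt_k ->]|[j [/= e_k ->]]].
  by rewrite /pconv big1 // => i _; rewrite ls_coef_lt ?mulr0 //; lia.
pose G i := d`_i * (if (i <= j)%N then s.2 (j - i)%N else 0).
rewrite /ps_mul (pconv_widen _ _ (leq_maxl (size d) j.+1)).
rewrite (eq_bigr (fun i : 'I_j.+1 => G i)); last first.
  by move=> i _; rewrite /G ifT //; have := ltn_ord i; lia.
rewrite -(sumr_ord_widen0 (F := G) (leq_maxr (size d) j.+1)); last first.
  by move=> i ji; rewrite /G ifF ?mulr0 //; lia.
apply: eq_bigr => i _; rewrite /G; case: ifP => le_ij.
  have -> : k - e - (nat_of_ord i)%:Z = s.1 + (j - i)%N%:Z by lia.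
  by rewrite ls_coef_addr.
by rewrite ls_coef_lt //; lia.
Qed.

Definition pval d : nat := find (fun c => c != 0) d.

Lemma pval_lt_size d : d != 0 -> (pval d < size d)%N.
Proof.
move=> d0; rewrite /pval -has_find; apply/hasP; exists (lead_coef d).
  by rewrite /lead_coef mem_nth // prednK // lt0n size_poly_eq0.
by rewrite lead_coef_eq0.
Qed.

Lemma coef_pval_neq0 d : d != 0 -> d`_(pval d) != 0.
Proof. by move/pval_lt_size; rewrite -has_find => /(nth_find 0). Qed.

Lemma coef_lt_pval d i : (i < pval d)%N -> d`_i = 0.
Proof. by move/(before_find 0)/negbFE/eqP. Qed.

Lemma pconv_pval d h j : d != 0 -> (forall j', j' < j -> h j' = 0) ->
  pconv d h (j + (pval d)%:Z) = d`_(pval d) * h j.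
Proof.
move=> d0 h_low; rewrite /pconv (bigD1 (Ordinal (pval_lt_size d0))) //= big1 ?addr0.
  by congr (_ * h _); lia.
move=> i /eqP ne_i; case: (ltnP i (pval d)) => [lt_i|le_i].
  by rewrite coef_lt_pval ?mul0r.
have : nat_of_ord i <> pval d by move=> e; apply: ne_i; apply: val_inj.
by move=> ne; rewrite h_low ?mulr0 //; lia.
Qed.

(* Solve [d * h = 0] for [h] upwards from its lowest coefficient. *)
Lemma pconv_eq0_low d h (B K0 : int) : d != 0 -> (forall j, j < B -> h j = 0) ->
  (forall k, k < K0 -> pconv d h (k + (pval d)%:Z) = 0) -> forall j, j < K0 -> h j = 0.
Proof.
move=> d0 h_low dh0.
suff h_steps (t : nat) j : j < B + t%:Z -> j < K0 -> h j = 0.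
  by move=> j ltj; apply: (h_steps `|j - B|.+1 j) => //; lia.
elim: t j => [|t IHt] j lt_jt lt_jK; first by apply: h_low; lia.
case: (ltrP j (B + t%:Z)) => le_jt; first exact: IHt.
have := dh0 j lt_jK; rewrite pconv_pval //; last by move=> j' ?; apply: IHt; lia.
by move/eqP; rewrite mulf_eq0 (negbTE (coef_pval_neq0 d0)) => /eqP.
Qed.

Lemma pconv_eq0 d h (B : int) : d != 0 -> (forall j, j < B -> h j = 0) ->
  (forall k, pconv d h k = 0) -> forall j, h j = 0.
Proof. by move=> d0 h_low dh0 j; apply: (pconv_eq0_low (K0 := j + 1) d0 h_low) => //; lia. Qed.

(* the polynomial [x (x + x^-1 - a)] *)
Definition facpoly (a : K) : {poly K} := Poly [:: 1; - a; 1].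

Definition mulfac (a : K) h (k : int) : K := h (k - 1) + h (k + 1) - a * h k.

Lemma facpoly_neq0 a : facpoly a != 0.
Proof.
apply/eqP => fa0; have := congr1 (fun p : {poly K} => p`_0) fa0.
by rewrite coef_Poly coef0 /=; apply/eqP; rewrite oner_eq0.
Qed.

Lemma pval_facpoly a : pval (facpoly a) = 0%N.
Proof.
have : (facpoly a)`_0 != 0 by rewrite coef_Poly oner_eq0.
by rewrite /pval; case: (polyseq (facpoly a)) => [|c cs] /=; rewrite ?eqxx // => ->.
Qed.

Lemma pconv_facpoly a h k : pconv (facpoly a) h k = mulfac a h (k - 1).
Proof.
rewrite (pconv_widen _ _ (size_Poly [:: 1; - a; 1])) !big_ord_recl big_ord0 !coef_Poly.
rewrite /= /bump /= /mulfac !mul1r.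
have -> : k - (1 + 0)%N%:Z = k - 1 by lia.
have -> : k - (1 + (1 + 0))%N%:Z = k - 1 - 1 by lia.
have -> : k - 1 + 1 = k by lia.
by rewrite addr0; ring.
Qed.

Lemma mulfacB a h h' k : mulfac a (fun j => h j - h' j) k = mulfac a h k - mulfac a h' k.
Proof. by rewrite /mulfac; ring. Qed.

Lemma eq_mulfac (a : K) h h' : h =1 h' -> mulfac a h =1 mulfac a h'.
Proof. by move=> hh' k; rewrite /mulfac !hh'. Qed.

Lemma mulfac_eq0_low a h (B K0 : int) : (forall j, j < B -> h j = 0) ->
  (forall k, k < K0 - 1 -> mulfac a h k = 0) -> forall j, j < K0 -> h j = 0.
Proof.
move=> h_low fh0; apply: (pconv_eq0_low (facpoly_neq0 a) h_low) => k ltk.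
by rewrite pval_facpoly addr0 pconv_facpoly fh0 //; lia.
Qed.

Lemma mulfac_eq0 a h (B : int) : (forall j, j < B -> h j = 0) ->
  (forall k, mulfac a h k = 0) -> forall j, h j = 0.
Proof.
move=> h_low fh0; apply: (pconv_eq0 (facpoly_neq0 a) h_low) => k.
by rewrite pconv_facpoly.
Qed.

End LaurentSeries.

Section LaurentExpansion.
Variable K : fieldType.
Implicit Types (r : {fraction {poly K}}) (p d : {poly K}) (s : ls K).
Local Notation "p %:F" := (@FracField.tofrac _ p).

Lemma numden_tofrac r : r * (\d_(repr r))%:F = (\n_(repr r))%:F.
Proof.
rewrite -{1}[r]reprK; unlock FracField.tofrac.
rewrite -[_ * _]/(FracField.mul _ _) !piE.
apply/eqmodP => /=; rewrite FracField.equivfE /FracField.mulf.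
by rewrite !numden_Ratio ?oner_neq0 ?mulr1 ?denom_ratioP // mulrC.
Qed.

Lemma poly_ls_mul_laurent_pq p d : d != 0 ->
  ls_coef (ls_mul (poly_ls d) (laurent_pq p d)) =1 ls_coef (poly_ls p).
Proof.
move=> d0 k; pose j := pval d; pose d' : ps K := fun i => d`_(i + j)%N.
have d_shift : (fun i => d`_i) =1 ps_shift j d'.
  move=> i; rewrite /ps_shift; case: ifP => lt_ij; first exact: coef_lt_pval.
  by rewrite /d' subnK //; lia.
have d'0 : d' 0%N != 0 by rewrite /d' add0n; exact: coef_pval_neq0.
have d'K : ps_mul d' (ps_mul (fun i => p`_i) (ps_inv d')) =1 (fun i => p`_i).
  move=> n; rewrite -ps_mulA (eq_ps_mul (ps_mulC _ _) (fun _ => erefl)) ps_mulA.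
  by rewrite (eq_ps_mul (fun _ => erefl) (ps_mulV d'0)) ps_mulC ps_mul1l.
rewrite -[RHS](ls_coef_shift _ _ j); apply: eq_ls_coef; first by rewrite /= add0r.
move=> n /=; rewrite (eq_ps_mul d_shift (fun _ => erefl)) ps_mul_shiftl /ps_shift.
by case: ifP => // _; exact: d'K.
Qed.

Lemma laurent_uniq r p d s : r * d%:F = p%:F -> d != 0 ->
  ls_coef (ls_mul (poly_ls d) s) =1 ls_coef (poly_ls p) -> ls_coef (laurent r) =1 ls_coef s.
Proof.
move=> rdp d0 ds_p; set P := \n_(repr r); set D := \d_(repr r); set L := laurent r.
have D0 : D != 0 by exact: denom_ratioP.
have dP_Dp : d * P = D * p.
  apply/eqP; rewrite -tofrac_eq !tofracM -numden_tofrac -rdp.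
  by apply/eqP; rewrite /D mulrCA [RHS]mulrCA (mulrC d%:F).
have dDL k : ls_coef (ls_mul (poly_ls (d * D)) L) k = ls_coef (poly_ls (d * P)) k.
  rewrite -(eq_ls_mull _ (poly_lsM d D) k) ls_mulA.
  by rewrite (eq_ls_mulr _ (poly_ls_mul_laurent_pq P D0)) poly_lsM.
have dDs k : ls_coef (ls_mul (poly_ls (d * D)) s) k = ls_coef (poly_ls (D * p)) k.
  rewrite mulrC -(eq_ls_mull _ (poly_lsM D d) k) ls_mulA.
  by rewrite (eq_ls_mulr _ ds_p) poly_lsM.
(* [L] and [s] are bounded-below solutions of [(d * D) * h = D * p]. *)
have L_s : forall k, ls_coef L k - ls_coef s k = 0.
  apply: (@pconv_eq0 _ (d * D) _ (- (`|L.1|%N%:Z + `|s.1|%N%:Z))).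
  - by rewrite mulf_neq0.
  - by move=> j ltj; rewrite !ls_coef_lt ?subrr //; lia.
  move=> k; rewrite pconvB -[k]subr0 -!ls_coef_mul_poly -/(poly_ls (d * D)).
  by rewrite dDL dDs dP_Dp subrr.
by move=> k; apply/eqP; rewrite -subr_eq0 L_s.
Qed.

Lemma laurentM r1 r2 :
  ls_coef (laurent (r1 * r2)) =1 ls_coef (ls_mul (laurent r1) (laurent r2)).
Proof.
have D1 : \d_(repr r1) != 0 by exact: denom_ratioP.
have D2 : \d_(repr r2) != 0 by exact: denom_ratioP.
apply: (laurent_uniq (p := \n_(repr r1) * \n_(repr r2)) (d := \d_(repr r1) * \d_(repr r2))).
- by rewrite !tofracM mulrACA !numden_tofrac.
- by rewrite mulf_neq0.
move=> k; rewrite -(eq_ls_mull _ (poly_lsM _ _) k) ls_mulACA.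
rewrite (eq_ls_mull _ (poly_ls_mul_laurent_pq _ D1)).
by rewrite (eq_ls_mulr _ (poly_ls_mul_laurent_pq _ D2)) poly_lsM.
Qed.

Lemma sigma_fac_mulX (q : K) i : sigma_fac q i * xF K = (facpoly (q ^+ i + q ^- i))%:F.
Proof.
have X0 : xF K != 0 by rewrite tofrac_eq0 polyX_eq0.
have -> : facpoly (q ^+ i + q ^- i) = 'X^2 - (q ^+ i + q ^- i)%:P * 'X + 1.
  apply/polyP => j; rewrite coef_Poly coefD coefB coefXn coefCM coefX coef1.
  case: j => [|[|[|j]]];
    by rewrite /= ?nth_nil ?mulr0n ?mulr1n ?mulr0 ?mulr1 ?subr0 ?sub0r ?add0r ?addr0.
have fac_id (F : fieldType) (x b : F) : x != 0 -> (x + x^-1 - b) * x = x * x - b * x + 1.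
  by move=> x0; field.
rewrite polyCD tofracD tofracB !tofracM tofracD tofrac1.
by rewrite /sigma_fac -addrA -opprD fac_id.
Qed.

Lemma sigma_fac_neq0 (q : K) i : sigma_fac q i != 0.
Proof.
apply: contraNneq (facpoly_neq0 (q ^+ i + q ^- i)) => fac0.
by rewrite -tofrac_eq0 -sigma_fac_mulX fac0 mul0r.
Qed.

Lemma laurent_mul_sigma_fac (q : K) i r :
  ls_coef (laurent (r * sigma_fac q i)) =1 mulfac (q ^+ i + q ^- i) (ls_coef (laurent r)).
Proof.
set a := q ^+ i + q ^- i.
have fac_ls : ls_coef (laurent (sigma_fac q i)) =1 ls_coef (-1, fun j => (facpoly a)`_j).
  apply: (laurent_uniq (sigma_fac_mulX q i)); first by rewrite polyX_eq0.
  move=> k; rewrite -(ls_coef_shift 0 _ 1); apply: eq_ls_coef; first by rewrite /= add0r.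
  have X_shift : (fun j => ('X : {poly K})`_j) =1 ps_shift 1 (ps1 K).
    by case=> [|j]; rewrite coefX /ps_shift /ps1 //= subn1.
  move=> n /=; rewrite (eq_ps_mul X_shift (fun _ => erefl)) ps_mul_shiftl /ps_shift.
  by case: ifP => // _; rewrite ps_mul1l.
move=> k; rewrite laurentM (eq_ls_mulr _ fac_ls) ls_mulC ls_coef_mul_poly.
by rewrite pconv_facpoly; congr mulfac; lia.
Qed.

Lemma sigma_rec (q : K) (k : int) : sigma q k = sigma q (k - 1) * sigma_fac q `|k|%N.
Proof.
case: k => [[|n]|n].
- by rewrite /= big_geq // big_nat1 mulVf // sigma_fac_neq0.
- have -> : (Posz n.+1 - 1) = Posz n by lia.
  by rewrite /= big_nat_recr.
- have -> : (Negz n - 1) = Negz n.+1 by lia.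
  by rewrite /= [in RHS]big_nat_recr //= invfM divfK // sigma_fac_neq0.
Qed.

End LaurentExpansion.

Definition qdiff {F : fieldType} (x : F) : F := x - x^-1.

Lemma qdiff_identity (F : fieldType) (a b w : F) : a != 0 -> b != 0 -> w != 0 ->
  qdiff a * qdiff b * qdiff (a * b * w) =
  qdiff (a / w) * qdiff b * qdiff (a * b) + qdiff w * (qdiff (a * b) ^+ 2 - qdiff a ^+ 2).
Proof. by move=> a0 b0 w0; rewrite /qdiff; field; rewrite a0 b0 w0. Qed.

Lemma qdiff_sqr (F : fieldType) (x : F) : x != 0 -> qdiff x ^+ 2 + 2 = x ^+ 2 + (x ^+ 2)^-1.
Proof. by move=> x0; rewrite /qdiff; field. Qed.

Lemma vv_neq0 : vv != 0.
Proof. by rewrite tofrac_eq0 polyX_eq0. Qed.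

Lemma vv_expD (x y : int) : vv ^ (x + y) = vv ^ x * vv ^ y.
Proof. exact/expfzDr/vv_neq0. Qed.

Lemma qbrE (z : int) : qbr z = qdiff (vv ^ z).
Proof. by rewrite /qbr /qdiff invr_expz. Qed.

(* At [x, y, z] = [m + 1, n - i, i + 1] this is [gamma_rec] times [qbr (i + 1) / gamma m n i]. *)
Lemma qbr_identity (x y z : int) :
  qbr x * qbr y * qbr (x + y + z) =
  qbr (x - z) * qbr y * qbr (x + y) + qbr z * (qbr (x + y) ^+ 2 - qbr x ^+ 2).
Proof.
rewrite !qbrE !vv_expD -invr_expz.
by apply: qdiff_identity; apply: expfz_neq0; exact: vv_neq0.
Qed.

Lemma qbr_neq0 (k : nat) : qbr k.+1 != 0.
Proof.
rewrite qbrE /qdiff subr_eq0; apply/eqP; change (vv ^ k.+1) with (vv ^+ k.+1) => e.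
have : vv ^+ (k.+1 + k.+1) = 1 by rewrite exprD {2}e mulfV // expf_neq0 // vv_neq0.
rewrite /vv -tofracXn -tofrac1 => /eqP; rewrite tofrac_eq => /eqP.
by move/(congr1 (fun p : {poly rat} => size p)); rewrite size_polyXn size_poly1.
Qed.

Lemma qintE z : qint z = qbr z / qbr 1.
Proof. by rewrite /qint /qbr expr1z exprN1. Qed.

Lemma qbr_fallSr z i : qbr_fall z i.+1 = qbr_fall z i * qbr (z - i%:Z).
Proof. by rewrite /qbr_fall big_ord_recr. Qed.

Lemma qbr_fallSl z i : qbr_fall (z + 1) i.+1 = qbr (z + 1) * qbr_fall z i.
Proof.
rewrite /qbr_fall big_ord_recl subr0; congr (_ * _); apply: eq_bigr => k _.
by rewrite lift0; congr qbr; lia.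
Qed.

Lemma qbr_fall_diag (i : nat) : qbr_fall i.+1 i.+1 = qbr i.+1 * qbr_fall i i.
Proof.
have -> : i.+1%:Z = i%:Z + 1 by lia.
exact: qbr_fallSl.
Qed.

Lemma qbr_fall_diag_neq0 (i : nat) : qbr_fall i i != 0.
Proof.
elim: i => [|i IHi]; first by rewrite /qbr_fall big_ord0 oner_neq0.
by rewrite qbr_fall_diag mulf_neq0 ?qbr_neq0.
Qed.

Lemma qfactE (i : nat) : qfact i = qbr_fall i i / qbr 1 ^+ i.
Proof.
elim: i => [|i IHi]; first by rewrite /qfact big_geq // /qbr_fall big_ord0 divr1.
rewrite /qfact big_nat_recr //= -/(qfact i) IHi qbr_fall_diag qintE exprS.
by rewrite mulrACA -invfM (mulrC (qbr_fall i i)) (mulrC (qbr 1 ^+ i)).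
Qed.

Lemma qbinomE N i : qbinom N i = qbr_fall N i / qbr_fall i i.
Proof.
have prod_qint : \prod_(k < i) qint (N - k%:Z) = qbr_fall N i / qbr 1 ^+ i.
  rewrite (eq_bigr (fun k : 'I_i => qbr (N - k%:Z) / qbr 1)) => [|k _]; last exact: qintE.
  by rewrite prodf_div -(big_mkord xpredT (fun=> qbr 1)) prodr_const_nat subn0.
rewrite /qbinom prod_qint qfactE invf_div mulrA divfK // expf_neq0 //.
exact: (qbr_neq0 0).
Qed.

Lemma gammaE m n i :
  gamma m n i = qbr_fall m i * qbr_fall n i * qbr_fall (m + n + 1) i / qbr_fall i i.
Proof. by rewrite /gamma qbinomE mulrA. Qed.

Lemma gammaSl m n i : gamma (m + 1) n i.+1 * qbr i.+1 =
  gamma m n i * (qbr (m + 1) * qbr (n - i%:Z) * qbr (m + n + 1 + 1)).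
Proof.
rewrite !gammaE; have -> : m + 1 + n + 1 = m + n + 1 + 1 by lia.
rewrite !qbr_fallSl qbr_fallSr qbr_fall_diag divfMlK ?qbr_neq0 //.
ring.
Qed.

Lemma gammaSr m n i : gamma m n i.+1 * qbr i.+1 =
  gamma m n i * (qbr (m - i%:Z) * qbr (n - i%:Z) * qbr (m + n + 1 - i%:Z)).
Proof. rewrite !gammaE qbr_fall_diag !qbr_fallSr divfMlK ?qbr_neq0 //; ring. Qed.

Lemma gamma_rec m n i : gamma (m + 1) n i.+1 =
  gamma m n i.+1 + gamma m n i * (qbr (m + n + 1 - i%:Z) ^+ 2 - qbr (m + 1) ^+ 2).
Proof.
apply: (mulIf (qbr_neq0 i)); rewrite mulrDl gammaSl gammaSr.
have := qbr_identity (m + 1) (n - i%:Z) i.+1%:Z.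
have -> : m + 1 + (n - i%:Z) + i.+1%:Z = m + n + 1 + 1 by lia.
have -> : m + 1 - i.+1%:Z = m - i%:Z by lia.
have -> : m + 1 + (n - i%:Z) = m + n + 1 - i%:Z by lia.
move=> ->; ring.
Qed.

Lemma gamma0 m n : gamma m n 0 = 1.
Proof. by rewrite gammaE /qbr_fall !big_ord0 invr1 !mulr1. Qed.

Lemma gamma0n n i : gamma 0 n i.+1 = 0.
Proof. by rewrite gammaE /qbr_fall big_ord_recl subr0 /qbr oppr0 subrr !mul0r. Qed.

Lemma qq_exp_abs (k : int) : qq ^+ `|k| + qq ^- `|k| = qbr k ^+ 2 + 2.
Proof.
rewrite qbrE qdiff_sqr ?expfz_neq0 ?vv_neq0 // /qq.
case: k => j /=; first by rewrite -!exprM mulnC.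
have -> : vv ^ Negz j = (vv ^+ j.+1)^-1 by [].
by rewrite addrC exprVn invrK -!exprM mulnC.
Qed.

Lemma laurent_mul_sigma_rec r (k : int) : ls_coef (laurent (r * sigma qq k)) =1
  mulfac (qbr k ^+ 2 + 2) (ls_coef (laurent (r * sigma qq (k - 1)))).
Proof. by move=> j; rewrite sigma_rec mulrA laurent_mul_sigma_fac qq_exp_abs. Qed.

Lemma sigma0_coef_rec (k : int) :
  ls_coef (sigma0 qq k) =1 mulfac (qbr k ^+ 2 + 2) (ls_coef (sigma0 qq (k - 1))).
Proof. by move=> j; rewrite /sigma0 -[sigma qq k]mul1r laurent_mul_sigma_rec mul1r. Qed.

Lemma sigma0_coef_lt (k j : int) : j < - k -> ls_coef (sigma0 qq k) j = 0.
Proof.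
elim/int_succ_ind: k j => [|k IHk|k IHk] j ltj.
- have sigma0_0 : ls_coef (sigma0 qq 0) =1 ls_coef (poly_ls 1).
    apply: (laurent_uniq (p := 1) (d := 1)); rewrite ?oner_neq0 //.
      by rewrite /= big_geq // mulr1.
    by move=> i; rewrite poly_lsM mulr1.
  by rewrite sigma0_0 ls_coef_lt.
- by rewrite sigma0_coef_rec addrK /mulfac !IHk ?mulr0 ?subr0 ?addr0 //; lia.
- apply: (@mulfac_eq0_low _ (qbr (k + 1) ^+ 2 + 2) _ (sigma0 qq k).1 (- k)) => //.
    by move=> i; exact: ls_coef_lt.
  by move=> i lti; rewrite -[k in sigma0 qq k](addrK 1) -sigma0_coef_rec IHk //; lia.
Qed.

Section SigmaProduct.
Variable n : int.

Lemma sigma0_mul_rec m : ls_coef (ls_mul (sigma0 qq (m + 1)) (sigma0 qq n)) =1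
  mulfac (qbr (m + 1) ^+ 2 + 2) (ls_coef (ls_mul (sigma0 qq m) (sigma0 qq n))).
Proof.
move=> k; rewrite /sigma0 -(laurentM (sigma qq (m + 1)) _ k) mulrC laurent_mul_sigma_rec addrK.
by apply: eq_mulfac => j; rewrite mulrC laurentM.
Qed.

Definition gamma_sum (m : int) (M : nat) (k : int) : Qv :=
  \sum_(i < M) gamma m n i * ls_coef (sigma0 qq (m + n - i%:Z)) k.

Definition gamma_sum_bound (m k : int) : nat := `|k + m + n|.+1.

Lemma gamma_sum_stable m M k : (gamma_sum_bound m k <= M)%N ->
  gamma_sum m M k = gamma_sum m (gamma_sum_bound m k) k.
Proof.
pose F i := gamma m n i * ls_coef (sigma0 qq (m + n - i%:Z)) k.
move=> le_M; apply: (sumr_ord_widen0 (F := F) le_M) => i le_i.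
by rewrite /F sigma0_coef_lt ?mulr0 //; move: le_i; rewrite /gamma_sum_bound; lia.
Qed.

Lemma gamma_sum_lt m M k : k < - (m + n) -> gamma_sum m M k = 0.
Proof.
by move=> ltk; rewrite /gamma_sum big1 // => i _; rewrite sigma0_coef_lt ?mulr0 //; lia.
Qed.

Lemma gamma_sum0 M k : gamma_sum 0 M.+1 k = ls_coef (sigma0 qq n) k.
Proof.
rewrite /gamma_sum big_ord_recl gamma0 mul1r add0r subr0 big1 ?addr0 // => i _.
by rewrite lift0 gamma0n mul0r.
Qed.

Lemma gamma_sumS m M k : gamma_sum (m + 1) M.+1 k =
  mulfac (qbr (m + 1) ^+ 2 + 2) (gamma_sum m M) k +
  gamma m n M * ls_coef (sigma0 qq (m + 1 + n - M%:Z)) k.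
Proof.
pose d (i : nat) := qbr (m + 1 + n - i%:Z) ^+ 2 - qbr (m + 1) ^+ 2.
pose E (i : nat) := ls_coef (sigma0 qq (m + 1 + n - i%:Z)) k.
have gamma_m1_0 : gamma (m + 1) n 0 = gamma m n 0 by rewrite !gamma0.
have gamma_m1_S i : gamma (m + 1) n i.+1 = gamma m n i.+1 + gamma m n i * d i.
  by rewrite gamma_rec /d; congr (_ + _ * (qbr _ ^+ 2 - _)); lia.
rewrite /gamma_sum (@sum_shift_rec _ M _ _ _ E gamma_m1_0 gamma_m1_S).
congr (_ + _); rewrite /mulfac mulr_sumr -big_split -sumrB /=.
apply: eq_bigr => i _; rewrite /E sigma0_coef_rec /mulfac /d.
have -> : m + 1 + n - i%:Z - 1 = m + n - i%:Z by lia.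
have -> : m + 1 + n - i.+1%:Z = m + n - i%:Z by lia.
ring.
Qed.

Lemma gamma_sum_rec m k :
  gamma_sum (m + 1) (gamma_sum_bound (m + 1) k) k =
  mulfac (qbr (m + 1) ^+ 2 + 2) (fun j => gamma_sum m (gamma_sum_bound m j) j) k.
Proof.
pose M := (gamma_sum_bound m (k - 1) + gamma_sum_bound m (k + 1) +
           gamma_sum_bound m k + gamma_sum_bound (m + 1) k)%N.
rewrite -(@gamma_sum_stable _ M.+1); last by rewrite /M /gamma_sum_bound; lia.
rewrite gamma_sumS sigma0_coef_lt ?mulr0 ?addr0; last by rewrite /M /gamma_sum_bound; lia.
by rewrite /mulfac !(@gamma_sum_stable m M) // /M /gamma_sum_bound; lia.
Qed.

Lemma sigma0_mul_expansion m k :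
  ls_coef (ls_mul (sigma0 qq m) (sigma0 qq n)) k = gamma_sum m (gamma_sum_bound m k) k.
Proof.
elim/int_succ_ind: m k => [|m IHm|m IHm] k.
- by rewrite /sigma0 -(laurentM (sigma qq 0) _ k) /= big_geq // mul1r gamma_sum0.
- by rewrite sigma0_mul_rec gamma_sum_rec; exact: eq_mulfac.
set a := qbr (m + 1) ^+ 2 + 2; set e := (ls_mul (sigma0 qq m) (sigma0 qq n)).1.
pose D k :=
  ls_coef (ls_mul (sigma0 qq m) (sigma0 qq n)) k - gamma_sum m (gamma_sum_bound m k) k.
suff D0 : D k = 0 by apply/eqP; rewrite -subr_eq0 -/(D k) D0.
apply: (@mulfac_eq0 _ a D (- ((absz e)%:Z + (absz (m + n))%:Z))) => [j ltj|j].
  by rewrite /D ls_coef_lt ?gamma_sum_lt ?subr0 //; rewrite /e; lia.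
by rewrite mulfacB -sigma0_mul_rec -gamma_sum_rec IHm subrr.
Qed.

End SigmaProduct.

Theorem proposition3p3 (m n : int) :
  forall k : int, exists N : nat, forall M : nat, (N <= M)%N ->
    ls_coef (ls_mul (sigma0 qq m) (sigma0 qq n)) k =
    \sum_(i < M) gamma m n i * ls_coef (sigma0 qq (m + n - i%:Z)) k.
Proof.
move=> k; exists (gamma_sum_bound n m k) => M le_M.
by rewrite sigma0_mul_expansion -(gamma_sum_stable le_M).
Qed.
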